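(* There are ring homomorphisms $$\mathrm{B}(\mathbb{Z})\longrightarrow\mathrm{B}(\mathcal{R})\longrightarrow\mathrm{B}(\mathbb{Z})$$ whose composition is the identity of $\mathrm{B}(\mathbb{Z})$.
   Context: $\mathrm{B}(\mathbb{Z})$ is the Burnside ring of finite $\mathbb{Z}$-sets: the Grothendieck ring of isomorphism classes of pairs $(X,\pi)$ with $X$ a finite set and $\pi$ a permutation of $X$, with addition induced by disjoint union and multiplication by cartesian product (with permutation $\pi\times\pi'$). A rack is a set $R$ with a binary operation $\rhd$ such that every left multiplication $\ell_a\colon b\mapsto a\rhd b$ is a bijection and $a\rhd(b\rhd c)=(a\rhd b)\rhd(a\rhd c)$ for all $a,b,c$. A subrack is a subset $S$ with $\ell_s(S)=S$ for all $s\in S$; a decomposition of $R$ into $S$ and $T$ means $S,T$ are disjoint subracks (possibly empty) with $S\cup T=R$. The Burnside ring of finite racks $\mathrm{B}(\mathcal{R})$ is the abelian group generated by symbols $b(R)$, one for each finite rack $R$, subject to $b(R_1)=b(R_2)$ whenever $R_1\cong R_2$ and $b(R)=b(S)+b(T)$ whenever $R$ decomposes into $S$ and $T$, with ring structure $b(R)b(R')=b(R\times R')$ (cartesian product, componentwise operation) and unit the class of the singleton. *)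

From HB Require Import structures.
From mathcomp Require Import all_boot all_order all_algebra.
From mathcomp Require Import freeg.
Set Implicit Arguments. Unset Strict Implicit. Unset Printing Implicit Defensive.
Import GRing.Theory.
Local Open Scope ring_scope.

(* Finite racks, up to relabelling, are coded on carriers 'I_n.        *)
Definition rackop (n : nat) := {ffun 'I_n -> {ffun 'I_n -> 'I_n}}.

(* every left multiplication is a bijection (= injective, finite carrier)
   and left self-distributivity a > (b > c) = (a > b) > (a > c). *)
Definition is_rackb n (f : rackop n) : bool :=
  [forall a, injectiveb (f a)] &&
  [forall a, forall b, forall c, f a (f b c) == f (f a b) (f a c)].

Definition rack_on n := {f : rackop n | is_rackb f}.
Definition frack := {n : nat & rack_on n}.

Definition rcar (R : frack) := 'I_(tag R).
Definition rop (R : frack) (a b : rcar R) : rcar R := val (tagged R) a b.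

Definition rack_hom (R S : frack) (f : rcar R -> rcar S) : Prop :=
  forall a b, f (rop a b) = rop (f a) (f b).

Definition rack_iso (R S : frack) : Prop :=
  exists f : rcar R -> rcar S, bijective f /\ rack_hom f.

Definition rack_decomp (R S T : frack) : Prop :=
  exists (i : rcar S -> rcar R) (j : rcar T -> rcar R),
    [/\ injective i /\ injective j, rack_hom i, rack_hom j,
        (forall a b, i a <> j b) &
        (forall x, (exists a, i a = x) \/ (exists b, j b = x))].

Definition triv_rackop : rackop 1 := [ffun a => [ffun b => b]].
Lemma triv_rackP : is_rackb triv_rackop.
Proof.
apply/andP; split.
  apply/forallP => a; apply/injectiveP => x y; by rewrite /triv_rackop !ffunE.
apply/forallP => a; apply/forallP => b; apply/forallP => c.
by rewrite /triv_rackop !ffunE.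
Qed.
Definition unit_rack : frack := Tagged rack_on (exist _ triv_rackop triv_rackP).

(* cartesian product rack (componentwise operation), transported from
   'I_n * 'I_m to 'I_#|'I_n * 'I_m| along enum_val / enum_rank.  The
   fallback branch never occurs (a product of racks is a rack). *)
Definition prod_rackop (R S : frack) : rackop #|{: rcar R * rcar S}| :=
  [ffun i => [ffun j =>
     let x := enum_val i in let y := enum_val j in
     enum_rank (rop x.1 y.1, rop x.2 y.2)]].
Definition rack_prod (R S : frack) : frack :=
  match insub (prod_rackop R S) with
  | Some f => Tagged rack_on f
  | None => unit_rack
  end.

(* Finite Z-sets = finite sets with a permutation, coded on 'I_n.      *)
Definition zperm_on n := {f : {ffun 'I_n -> 'I_n} | injectiveb f}.
Definition fzset := {n : nat & zperm_on n}.

Definition zcar (X : fzset) := 'I_(tag X).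
Definition zact (X : fzset) (a : zcar X) : zcar X := val (tagged X) a.

Definition zhom (X Y : fzset) (f : zcar X -> zcar Y) : Prop :=
  forall a, f (zact a) = zact (f a).

Definition zset_iso (X Y : fzset) : Prop :=
  exists f : zcar X -> zcar Y, bijective f /\ zhom f.

Definition zset_decomp (X Y Z : fzset) : Prop :=
  exists (i : zcar Y -> zcar X) (j : zcar Z -> zcar X),
    [/\ injective i /\ injective j, zhom i, zhom j,
        (forall a b, i a <> j b) &
        (forall x, (exists a, i a = x) \/ (exists b, j b = x))].

Definition triv_zperm : {ffun 'I_1 -> 'I_1} := [ffun a => a].
Lemma triv_zpermP : injectiveb triv_zperm.
Proof. by apply/injectiveP => x y; rewrite !ffunE. Qed.
Definition unit_zset : fzset := Tagged zperm_on (exist _ triv_zperm triv_zpermP).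

Definition prod_zperm (X Y : fzset) : {ffun 'I_#|{: zcar X * zcar Y}| -> 'I_#|{: zcar X * zcar Y}|} :=
  [ffun i => let x := enum_val i in enum_rank (zact x.1, zact x.2)].
Definition zset_prod (X Y : fzset) : fzset :=
  match insub (prod_zperm X Y) with
  | Some f => Tagged zperm_on f
  | None => unit_zset
  end.

(* Presentations of the Burnside rings: free abelian group on the      *)
(* generators, modulo the subgroup generated by the relations.         *)
Inductive zspan (G : zmodType) (P : G -> Prop) : G -> Prop :=
  | zspan0 : zspan P 0
  | zspanD x y : P x -> zspan P y -> zspan P (y + x)
  | zspanB x y : P x -> zspan P y -> zspan P (y - x).

Definition preBR := {freeg frack / int}.
Definition BR_rel (x : preBR) : Prop :=
  (exists R1 R2, rack_iso R1 R2 /\ x = << R1 >> - << R2 >>) \/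
  (exists R S T, rack_decomp R S T /\ x = << R >> - (<< S >> + << T >>)).
Definition BR_eq (x y : preBR) : Prop := zspan BR_rel (x - y).
Definition BR_one : preBR := << unit_rack >>.
(* bilinear extension of b(R) b(R') = b(R x R') *)
Definition BR_mul (x y : preBR) : preBR :=
  fglift (fun R => fglift (fun S => << rack_prod R S >> : preBR) y) x.

Definition preBZ := {freeg fzset / int}.
Definition BZ_rel (x : preBZ) : Prop :=
  (exists X1 X2, zset_iso X1 X2 /\ x = << X1 >> - << X2 >>) \/
  (exists X Y Z, zset_decomp X Y Z /\ x = << X >> - (<< Y >> + << Z >>)).
Definition BZ_eq (x y : preBZ) : Prop := zspan BZ_rel (x - y).
Definition BZ_one : preBZ := << unit_zset >>.
Definition BZ_mul (x y : preBZ) : preBZ :=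
  fglift (fun X => fglift (fun Y => << zset_prod X Y >> : preBZ) y) x.

(* A map of presentations inducing a (unital) ring homomorphism between
   the quotient rings (A/eqA, +, mulA, oneA) -> (B/eqB, +, mulB, oneB). *)
Definition induces_ring_hom (A B : zmodType)
  (eqA : A -> A -> Prop) (mulA : A -> A -> A) (oneA : A)
  (eqB : B -> B -> Prop) (mulB : B -> B -> B) (oneB : B) (f : A -> B) : Prop :=
  [/\ forall x y, eqA x y -> eqB (f x) (f y),
      forall x y, eqB (f (x + y)) (f x + f y),
      forall x y, eqB (f (mulA x y)) (mulB (f x) (f y)) &
      eqB (f oneA) oneB].

From HB Require Import structures.
From mathcomp Require Import all_boot all_order all_algebra.
From mathcomp Require Import freeg.
Set Implicit Arguments. Unset Strict Implicit. Unset Printing Implicit Defensive.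
Import GRing.Theory.
Local Open Scope ring_scope.

(* A finite Z-set (X, pi) is a rack for a |> b := pi b (the permutation rack),
   and a finite rack R is a Z-set for the permutation a |-> a |> a, which is
   injective because (a |> a) |> b = a |> b.  Both constructions send
   isomorphisms, decompositions, products and the singleton to the same kind
   of data, so extended linearly to the free abelian groups on the generators
   they preserve the relations and induce unital ring homomorphisms between
   the presented Burnside rings.  The diagonal permutation of the permutation
   rack of (X, pi) is pi itself, so the composite is the identity. *)

Section SubgroupSpan.
Variables (G : zmodType) (P : G -> Prop).

Lemma zspan_rel x : P x -> zspan P x.
Proof. by move=> Px; rewrite -[x]add0r; apply: zspanD => //; apply: zspan0. Qed.

Lemma zspan_add a b : zspan P a -> zspan P b -> zspan P (a + b).
Proof.
move=> Pa; elim=> [|x y Px _ IH|x y Px _ IH]; first by rewrite addr0.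
  by rewrite addrA; apply: zspanD.
by rewrite addrA; apply: zspanB.
Qed.

Lemma zspan_opp a : zspan P a -> zspan P (- a).
Proof.
elim=> [|x y Px _ IH|x y Px _ IH]; first by rewrite oppr0; apply: zspan0.
  by rewrite opprD; apply: zspanB.
by rewrite opprD opprK; apply: zspanD.
Qed.

Lemma zspan_mulrz a (n : int) : zspan P a -> zspan P (a *~ n).
Proof.
move=> Pa; have Pan m : zspan P (a *+ m).
  elim: m => [|m IH]; first by rewrite mulr0n; apply: zspan0.
  by rewrite mulrS; apply: zspan_add.
by case: n => m; rewrite ?NegzE ?mulrNz -pmulrn //; apply: zspan_opp.
Qed.

Lemma zspan_sum (I : Type) (s : seq I) (F : I -> G) :
  (forall i, zspan P (F i)) -> zspan P (\sum_(i <- s) F i).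
Proof.
move=> PF; elim: s => [|i s IH]; first by rewrite big_nil; apply: zspan0.
by rewrite big_cons; apply: zspan_add.
Qed.

End SubgroupSpan.

Lemma zspan_additive (G H : zmodType) (P : G -> Prop) (Q : H -> Prop)
    (f : {additive G -> H}) x :
  (forall y, P y -> Q (f y)) -> zspan P x -> zspan Q (f x).
Proof.
move=> PQ; elim=> [|a b Pa _ IH|a b Pa _ IH]; first by rewrite raddf0; apply: zspan0.
  by rewrite raddfD; apply: zspanD; first exact: PQ.
by rewrite raddfB; apply: zspanB; first exact: PQ.
Qed.

HB.instance Definition _ (K : choiceType) (M : lmodType int) (g : K -> M) :=
  GRing.isZmodMorphism.Build _ _ (fglift g) (lift_is_additive g).

Lemma scaler_intz (M : lmodType int) (k : int) (v : M) : k *: v = v *~ k.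
Proof. by rewrite -[in LHS](intz k) scaler_int. Qed.

Lemma fglift_freegU (K : choiceType) (M : lmodType int) (g : K -> M) (z : K) :
  fglift g << z >> = g z.
Proof. by rewrite liftU scale1r. Qed.

Lemma fgliftE (K : choiceType) (M : lmodType int) (g : K -> M)
    (D : {freeg K / int}) :
  fglift g D = \sum_(z <- dom D) coeff z D *: g z.
Proof.
rewrite -{1}[D]freeg_sumE raddf_sum; apply: eq_bigr => z _; exact: liftU.
Qed.

Lemma fglift_comp (K L : choiceType) (M : lmodType int)
    (g : L -> {freeg K / int}) (h : K -> M) D :
  fglift h (fglift g D) = fglift (fun z => fglift h (g z)) D.
Proof.
rewrite (fgliftE g) (fgliftE (fun z => fglift h (g z))) raddf_sum.
by apply: eq_bigr => z _; rewrite !scaler_intz raddfMz.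
Qed.

Lemma zspan_fglift (K : choiceType) (M : lmodType int) (P : M -> Prop)
    (g h : K -> M) D :
  (forall z, zspan P (g z - h z)) -> zspan P (fglift g D - fglift h D).
Proof.
move=> Pgh; rewrite !fgliftE -sumrB; apply: zspan_sum => z.
by rewrite -scalerBr scaler_intz; apply: zspan_mulrz.
Qed.

Lemma fglift_freegU_id (K : choiceType) (D : {freeg K / int}) :
  fglift (fun z => << z >>) D = D.
Proof.
rewrite fgliftE -[RHS]freeg_sumE; apply: eq_bigr => z _.
by rewrite scaler_intz freegU_mulz intz.
Qed.

(* [BZ_eq], [BZ_mul], [BR_eq] and [BR_mul] are instances of these by conversion. *)
Section BurnsidePresentation.
Variables (K : choiceType) (iso : K -> K -> Prop) (decomp : K -> K -> K -> Prop)
  (prod : K -> K -> K).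

Definition burnside_rel (x : {freeg K / int}) : Prop :=
  (exists a b, iso a b /\ x = << a >> - << b >>) \/
  (exists a b c, decomp a b c /\ x = << a >> - (<< b >> + << c >>)).

Definition burnside_eq (x y : {freeg K / int}) : Prop := zspan burnside_rel (x - y).

Definition burnside_mul (x y : {freeg K / int}) : {freeg K / int} :=
  fglift (fun a => fglift (fun b => << prod a b >> : {freeg K / int}) y) x.

Lemma burnside_eq_iso a b : iso a b -> burnside_eq << a >> << b >>.
Proof. by move=> ab; apply: zspan_rel; left; exists a, b. Qed.

End BurnsidePresentation.

Definition fgmap (K L : choiceType) (F : K -> L) : {freeg K / int} -> {freeg L / int} :=
  fglift (fun a => << F a >>).

Section BurnsideFunctoriality.
Variables (K L : choiceType)
  (isoK : K -> K -> Prop) (decompK : K -> K -> K -> Prop) (prodK : K -> K -> K) (oneK : K)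
  (isoL : L -> L -> Prop) (decompL : L -> L -> L -> Prop) (prodL : L -> L -> L) (oneL : L)
  (F : K -> L).
Hypotheses (F_iso : forall a b, isoK a b -> isoL (F a) (F b))
  (F_decomp : forall a b c, decompK a b c -> decompL (F a) (F b) (F c))
  (F_prod : forall a b, isoL (F (prodK a b)) (prodL (F a) (F b)))
  (F_one : isoL (F oneK) oneL).

Lemma fgmap_burnside_rel x :
  burnside_rel isoK decompK x -> burnside_rel isoL decompL (fgmap F x).
Proof.
rewrite /fgmap; case=> [[a [b [ab ->]]] | [a [b [c [abc ->]]]]].
  left; exists (F a), (F b).
  by rewrite raddfB /= !fglift_freegU; split; first exact: F_iso.
right; exists (F a), (F b), (F c).
by rewrite raddfB raddfD /= !fglift_freegU; split; first exact: F_decomp.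
Qed.

Lemma fgmap_induces_ring_hom :
  induces_ring_hom (burnside_eq isoK decompK) (burnside_mul prodK) << oneK >>
    (burnside_eq isoL decompL) (burnside_mul prodL) << oneL >> (fgmap F).
Proof.
split.
- move=> x y xy; rewrite /burnside_eq -raddfB.
  exact: (zspan_additive fgmap_burnside_rel xy).
- by move=> x y; rewrite /burnside_eq /fgmap raddfD subrr; apply: zspan0.
- move=> x y; rewrite /burnside_mul /fgmap !fglift_comp.
  apply: zspan_fglift => a; rewrite fglift_freegU !fglift_comp.
  apply: zspan_fglift => b; rewrite !fglift_freegU.
  exact: burnside_eq_iso.
- by rewrite /fgmap fglift_freegU; apply: burnside_eq_iso.
Qed.

Lemma fgmap_retraction (G : L -> K) :
  (forall a, isoK (G (F a)) a) ->
  forall x, burnside_eq isoK decompK (fgmap G (fgmap F x)) x.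
Proof.
move=> GF x; rewrite /fgmap fglift_comp -{2}(fglift_freegU_id x).
by apply: zspan_fglift => a; rewrite fglift_freegU; apply: burnside_eq_iso.
Qed.

End BurnsideFunctoriality.

Section RackAxioms.
Variable R : frack.
Implicit Types a b c : rcar R.

Lemma rop_inj a : injective (rop a).
Proof. by have /andP[/forallP/(_ a)/injectiveP] := valP (tagged R). Qed.

Lemma rop_self_distr a b c : rop a (rop b c) = rop (rop a b) (rop a c).
Proof.
have /andP[_ /forallP/(_ a)/forallP/(_ b)/forallP/(_ c)/eqP] := valP (tagged R).
exact.
Qed.

Lemma rop_diagl a b : rop (rop a a) b = rop a b.
Proof.
have [g _ gK] := injF_bij (@rop_inj a).
by rewrite -[b]gK -rop_self_distr.
Qed.

Lemma rop_diag_inj : injective (fun a => rop a a).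
Proof.
move=> a b /= ab.
have aa_ba : rop a a = rop b a by rewrite -(rop_diagl a a) ab rop_diagl.
by apply: (@rop_inj b); rewrite -aa_ba ab.
Qed.

End RackAxioms.

Lemma zact_inj (X : fzset) : injective (@zact X).
Proof. exact/injectiveP/(valP (tagged X)). Qed.

Definition perm_rackop (X : fzset) : rackop (tag X) := [ffun _ => [ffun b => zact b]].

Lemma perm_rackopP X : is_rackb (perm_rackop X).
Proof.
apply/andP; split.
  by apply/forallP => a; apply/injectiveP => x y; rewrite !ffunE; apply: zact_inj.
by apply/forallP => a; apply/forallP => b; apply/forallP => c; rewrite !ffunE.
Qed.

Definition perm_rack (X : fzset) : frack :=
  Tagged rack_on (exist _ (perm_rackop X) (perm_rackopP X)).

Definition diag_perm (R : frack) : {ffun 'I_(tag R) -> 'I_(tag R)} := [ffun a => rop a a].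

Lemma diag_permP R : injectiveb (diag_perm R).
Proof. by apply/injectiveP => x y; rewrite !ffunE; apply: rop_diag_inj. Qed.

Definition diag_zset (R : frack) : fzset :=
  Tagged zperm_on (exist _ (diag_perm R) (diag_permP R)).

Lemma perm_rack_op X (a b : rcar (perm_rack X)) : rop a b = zact (b : zcar X).
Proof. by rewrite /rop /= !ffunE. Qed.

Lemma diag_zset_act R (a : zcar (diag_zset R)) : zact a = rop (a : rcar R) a.
Proof. by rewrite /zact /= !ffunE. Qed.

Lemma perm_rack_iso X Y : zset_iso X Y -> rack_iso (perm_rack X) (perm_rack Y).
Proof.
by case=> f [bij_f hom_f]; exists f; split => // a b; rewrite !perm_rack_op hom_f.
Qed.

Lemma diag_zset_iso R S : rack_iso R S -> zset_iso (diag_zset R) (diag_zset S).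
Proof.
by case=> f [bij_f hom_f]; exists f; split => // a; rewrite !diag_zset_act hom_f.
Qed.

Lemma perm_rack_decomp X Y Z :
  zset_decomp X Y Z -> rack_decomp (perm_rack X) (perm_rack Y) (perm_rack Z).
Proof.
case=> i [j [inj_ij hom_i hom_j disj cover]]; exists i, j.
by split => // a b; rewrite !perm_rack_op (hom_i, hom_j).
Qed.

Lemma diag_zset_decomp R S T :
  rack_decomp R S T -> zset_decomp (diag_zset R) (diag_zset S) (diag_zset T).
Proof.
case=> i [j [inj_ij hom_i hom_j disj cover]]; exists i, j.
by split => // a; rewrite !diag_zset_act (hom_i, hom_j).
Qed.

Lemma diag_zset_perm_rack X : zset_iso (diag_zset (perm_rack X)) X.
Proof.
exists id; split; first by exists id.
by move=> a; rewrite diag_zset_act perm_rack_op.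
Qed.

Lemma perm_rack_unit : rack_iso (perm_rack unit_zset) unit_rack.
Proof.
exists id; split; first by exists id.
by move=> a b; rewrite perm_rack_op /rop /zact /= !ffunE.
Qed.

Lemma diag_zset_unit : zset_iso (diag_zset unit_rack) unit_zset.
Proof.
exists id; split; first by exists id.
by move=> a; rewrite diag_zset_act /rop /zact /= !ffunE.
Qed.

Lemma prod_rackopP R S : is_rackb (prod_rackop R S).
Proof.
apply/andP; split.
  apply/forallP => a; apply/injectiveP => x y; rewrite !ffunE.
  move/enum_rank_inj => [/rop_inj E1 /rop_inj E2].
  apply: enum_val_inj; move: E1 E2.
  by case: (enum_val x); case: (enum_val y) => ? ? ? ? /= -> ->.
apply/forallP => a; apply/forallP => b; apply/forallP => c; rewrite !ffunE !enum_rankK /=.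
by rewrite (rop_self_distr (enum_val a).1) (rop_self_distr (enum_val a).2).
Qed.

Lemma rack_prodE R S :
  rack_prod R S = Tagged rack_on (exist _ (prod_rackop R S) (prod_rackopP R S)).
Proof. by rewrite /rack_prod (insubT _ (prod_rackopP R S)). Qed.

Lemma prod_zpermP X Y : injectiveb (prod_zperm X Y).
Proof.
apply/injectiveP => x y; rewrite !ffunE.
move/enum_rank_inj => [/zact_inj E1 /zact_inj E2].
apply: enum_val_inj; move: E1 E2.
by case: (enum_val x); case: (enum_val y) => ? ? ? ? /= -> ->.
Qed.

Lemma zset_prodE X Y :
  zset_prod X Y = Tagged zperm_on (exist _ (prod_zperm X Y) (prod_zpermP X Y)).
Proof.
rewrite /zset_prod; case: insubP => [u _ uE|]; last by rewrite prod_zpermP.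
by congr Tagged; apply: val_inj.
Qed.

Lemma perm_rack_prod X Y :
  rack_iso (perm_rack (zset_prod X Y)) (rack_prod (perm_rack X) (perm_rack Y)).
Proof.
rewrite rack_prodE zset_prodE; exists id; split; first by exists id.
by move=> a b; rewrite /rop /= !ffunE /zact /= ffunE /= !perm_rack_op.
Qed.

Lemma diag_zset_prod R S :
  zset_iso (diag_zset (rack_prod R S)) (zset_prod (diag_zset R) (diag_zset S)).
Proof.
rewrite rack_prodE zset_prodE; exists id; split; first by exists id.
by move=> a; rewrite /zact /= !ffunE /rop /= ffunE /= ffunE !diag_zset_act.
Qed.

Theorem proposition6p3 :
  exists (phi : preBZ -> preBR) (psi : preBR -> preBZ),
    [/\ induces_ring_hom BZ_eq BZ_mul BZ_one BR_eq BR_mul BR_one phi,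
        induces_ring_hom BR_eq BR_mul BR_one BZ_eq BZ_mul BZ_one psi &
        forall x : preBZ, BZ_eq (psi (phi x)) x].
Proof.
exists (fgmap perm_rack), (fgmap diag_zset); split.
- exact: (fgmap_induces_ring_hom perm_rack_iso perm_rack_decomp perm_rack_prod
            perm_rack_unit).
- exact: (fgmap_induces_ring_hom diag_zset_iso diag_zset_decomp diag_zset_prod
            diag_zset_unit).
- exact: (fgmap_retraction _ diag_zset_perm_rack).
Qed.
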